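(* Let $k$ be a real division algebra (one of $\mathbb{R},\mathbb{C},\mathbb{H},\mathbb{O}$) and let $\mathcal Z\subset k$ be a discrete subring closed under conjugation. Let $(a_n)_{n\ge1}$ be a sequence in $\mathcal Z$ and $x_0\in k$, and set $x_n=T_{a_n}\cdots T_{a_1}x_0$. Suppose that all $x_n$ are defined and $\|x_n\|<1$ for all $n\geq 0$. Then the associated continued fraction converges to $x_0$: \[x_0=\lim_{n\to\infty} T^{-1}_{a_1}\cdots T^{-1}_{a_n}0=\lim_{n\to\infty} \cfrac{1}{a_1+\cfrac{1}{\ddots+\cfrac{1}{a_n}}}.\]
   Context: $k$ is identified with $\mathbb{R}^d$ ($d=1,2,4,8$) with basis $1=e_0,e_1,\dots,e_{d-1}$ and its standard multiplication; for $x=a_0+\sum_{i\ge1}a_ie_i$, $\Re(x)=a_0$, $\overline{x}=\Re(x)-(x-\Re(x))$, $\|x\|^2=x\overline{x}$ (Euclidean norm), and convergence is with respect to the Euclidean distance. For $p,q\in k$, $p/q=pq^{-1}$. A subring is discrete if it is a discrete subset of $\mathbb{R}^d$. For a digit $a\in\mathcal Z$, $T_a x=x^{-1}-a$ and $T_a^{-1}x=(x+a)^{-1}$. The case $n=0$ means $x_0$ itself. *)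

From Stdlib Require Import Reals Lra Arith.
Open Scope R_scope.

(* The Cayley-Dickson algebras: CD 0 = R, CD 1 = C, CD 2 = H, CD 3 = O.
   CD m is R^(2^m) (nested pairs), with basis e_0 = 1, ... in the usual
   Cayley-Dickson ordering. *)
Fixpoint CD (m : nat) : Type :=
  match m with 0%nat => R | S m' => (CD m' * CD m')%type end.

Fixpoint cd_zero (m : nat) : CD m :=
  match m return CD m with 0%nat => 0 | S m' => (cd_zero m', cd_zero m') end.

Fixpoint cd_one (m : nat) : CD m :=
  match m return CD m with 0%nat => 1 | S m' => (cd_one m', cd_zero m') end.

Fixpoint cd_add (m : nat) : CD m -> CD m -> CD m :=
  match m return CD m -> CD m -> CD m with
  | 0%nat => Rplus
  | S m' => fun x y => (cd_add m' (fst x) (fst y), cd_add m' (snd x) (snd y))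
  end.

Fixpoint cd_opp (m : nat) : CD m -> CD m :=
  match m return CD m -> CD m with
  | 0%nat => Ropp
  | S m' => fun x => (cd_opp m' (fst x), cd_opp m' (snd x))
  end.

Definition cd_sub (m : nat) (x y : CD m) : CD m := cd_add m x (cd_opp m y).

Fixpoint cd_scale (m : nat) (r : R) : CD m -> CD m :=
  match m return CD m -> CD m with
  | 0%nat => fun x => r * x
  | S m' => fun x => (cd_scale m' r (fst x), cd_scale m' r (snd x))
  end.

Fixpoint cd_conj (m : nat) : CD m -> CD m :=
  match m return CD m -> CD m with
  | 0%nat => fun x => x
  | S m' => fun x => (cd_conj m' (fst x), cd_opp m' (snd x))
  end.

Fixpoint cd_mul (m : nat) : CD m -> CD m -> CD m :=
  match m return CD m -> CD m -> CD m with
  | 0%nat => Rmult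
  | S m' => fun x y =>
      let a := fst x in let b := snd x in let c := fst y in let d := snd y in
      (cd_sub m' (cd_mul m' a c) (cd_mul m' (cd_conj m' d) b),
       cd_add m' (cd_mul m' d a) (cd_mul m' b (cd_conj m' c)))
  end.

Fixpoint cd_norm2 (m : nat) : CD m -> R :=
  match m return CD m -> R with
  | 0%nat => fun x => x * x
  | S m' => fun x => cd_norm2 m' (fst x) + cd_norm2 m' (snd x)
  end.

Definition cd_norm (m : nat) (x : CD m) : R := sqrt (cd_norm2 m x).

(* inverse x^{-1} = conj(x) / ||x||^2 (total: 0^{-1} = 0, never used on 0
   in the hypotheses). *)
Definition cd_inv (m : nat) (x : CD m) : CD m :=
  cd_scale m (/ cd_norm2 m x) (cd_conj m x).

Definition is_subring (m : nat) (Z : CD m -> Prop) : Prop :=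
  Z (cd_one m) /\
  (forall x y, Z x -> Z y -> Z (cd_add m x y)) /\
  (forall x, Z x -> Z (cd_opp m x)) /\
  (forall x y, Z x -> Z y -> Z (cd_mul m x y)).

Definition is_discrete (m : nat) (Z : CD m -> Prop) : Prop :=
  forall z, Z z -> exists eps, 0 < eps /\
    forall w, Z w -> cd_norm m (cd_sub m w z) < eps -> w = z.

Definition conj_closed (m : nat) (Z : CD m -> Prop) : Prop :=
  forall z, Z z -> Z (cd_conj m z).

Definition T (m : nat) (a x : CD m) : CD m := cd_sub m (cd_inv m x) a.
Definition Tinv (m : nat) (a y : CD m) : CD m := cd_inv m (cd_add m y a).

Fixpoint orbit (m : nat) (a : nat -> CD m) (x0 : CD m) (n : nat) : CD m :=
  match n with
  | 0%nat => x0
  | S n' => T m (a (S n')) (orbit m a x0 n')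
  end.

Fixpoint cf_from (m : nat) (a : nat -> CD m) (s l : nat) : CD m :=
  match l with
  | 0%nat => cd_zero m
  | S l' => Tinv m (a s) (cf_from m a (S s) l')
  end.

Definition convergent (m : nat) (a : nat -> CD m) (n : nat) : CD m :=
  cf_from m a 1 n.

Definition cd_converges_to (m : nat) (u : nat -> CD m) (l : CD m) : Prop :=
  forall eps, 0 < eps -> exists N, forall n, (N <= n)%nat ->
    cd_norm m (cd_sub m (u n) l) < eps.

(* For the digits a_1, ..., a_n, the function
     G_n(y) = prod_(k<n) ||T_(a_k) ... T_(a_1) y||^2
   is a quadratic form A ||y||^2 - 2 <y, W> + C with ||W||^2 = A C and A, W, C in Z:
   pulling a form back along T_b only uses x conj(x) = ||x||^2 and the
   conjugation-invariance of the inner product.  G_(n+1) vanishes at the n-th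
   convergent c_n, hence G_(n+1)(y) = A_n ||y - c_n||^2, and at y = x_0 this gives
   A_n ||x_0 - c_n||^2 = prod_(k<=n) ||x_k||^2 <= 1, while A_n >= 1 by discreteness.
   If ||x_0 - c_n|| >= eps for infinitely many n, then for those n the coefficients
   A_n and W_n = A_n c_n are bounded, so by discreteness only finitely many forms
   G_(n+1) occur; but G_(n+1)(x_0) is strictly decreasing in n.
   Nothing uses that k is a division algebra. *)

From Stdlib Require Import Reals Lra Lia List ZArith Classical.
Open Scope R_scope.

Ltac destruct_cd := repeat match goal with x : CD (S _) |- _ => destruct x end; simpl in *.
Ltac cd_induction m := induction m; intros; destruct_cd.

Fixpoint cd_ip (m : nat) : CD m -> CD m -> R :=
  match m return CD m -> CD m -> R with
  | 0%nat => Rmult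
  | S m' => fun x y => cd_ip m' (fst x) (fst y) + cd_ip m' (snd x) (snd y)
  end.

Definition cd_real (m : nat) (r : R) : CD m := cd_scale m r (cd_one m).

Lemma cd_add_assoc m (x y z : CD m) : cd_add m x (cd_add m y z) = cd_add m (cd_add m x y) z.
Proof. revert x y z; cd_induction m; [ring | f_equal; auto]. Qed.
Lemma cd_add_0_r m (x : CD m) : cd_add m x (cd_zero m) = x.
Proof. revert x; cd_induction m; [ring | f_equal; auto]. Qed.
Lemma cd_add_0_l m (x : CD m) : cd_add m (cd_zero m) x = x.
Proof. revert x; cd_induction m; [ring | f_equal; auto]. Qed.
Lemma cd_add_opp_r m (x : CD m) : cd_add m x (cd_opp m x) = cd_zero m.
Proof. revert x; cd_induction m; [ring | f_equal; auto]. Qed.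
Lemma cd_add_opp_l m (x : CD m) : cd_add m (cd_opp m x) x = cd_zero m.
Proof. revert x; cd_induction m; [ring | f_equal; auto]. Qed.
Lemma cd_opp_involutive m (x : CD m) : cd_opp m (cd_opp m x) = x.
Proof. revert x; cd_induction m; [ring | f_equal; auto]. Qed.
Lemma cd_opp_add m (x y : CD m) : cd_opp m (cd_add m x y) = cd_add m (cd_opp m x) (cd_opp m y).
Proof. revert x y; cd_induction m; [ring | f_equal; auto]. Qed.
Lemma cd_opp_zero m : cd_opp m (cd_zero m) = cd_zero m.
Proof. cd_induction m; [ring | f_equal; auto]. Qed.
Lemma cd_scale_zero m r : cd_scale m r (cd_zero m) = cd_zero m.
Proof. cd_induction m; [ring | f_equal; auto]. Qed.
Lemma cd_scale_opp m r (x : CD m) : cd_scale m r (cd_opp m x) = cd_opp m (cd_scale m r x).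
Proof. revert x; cd_induction m; [ring | f_equal; auto]. Qed.
Lemma cd_scale_add m r (x y : CD m) :
  cd_scale m r (cd_add m x y) = cd_add m (cd_scale m r x) (cd_scale m r y).
Proof. revert x y; cd_induction m; [ring | f_equal; auto]. Qed.
Lemma cd_scale_assoc m r s (x : CD m) : cd_scale m r (cd_scale m s x) = cd_scale m (r * s) x.
Proof. revert x; cd_induction m; [ring | f_equal; auto]. Qed.
Lemma cd_scale_1 m (x : CD m) : cd_scale m 1 x = x.
Proof. revert x; cd_induction m; [ring | f_equal; auto]. Qed.
Lemma cd_scale_0 m (x : CD m) : cd_scale m 0 x = cd_zero m.
Proof. revert x; cd_induction m; [ring | f_equal; auto]. Qed.
Lemma cd_scale_plus m r s (x : CD m) :
  cd_scale m (r + s) x = cd_add m (cd_scale m r x) (cd_scale m s x).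
Proof. revert x; cd_induction m; [ring | f_equal; auto]. Qed.
Lemma cd_scale_Ropp m r (x : CD m) : cd_scale m (- r) x = cd_opp m (cd_scale m r x).
Proof. revert x; cd_induction m; [ring | f_equal; auto]. Qed.

Lemma cd_scale_sub m r (x y : CD m) :
  cd_scale m r (cd_sub m x y) = cd_sub m (cd_scale m r x) (cd_scale m r y).
Proof. unfold cd_sub; now rewrite cd_scale_add, cd_scale_opp. Qed.
Lemma cd_sub_add m (x y : CD m) : cd_sub m (cd_add m x y) y = x.
Proof. unfold cd_sub; now rewrite <- cd_add_assoc, cd_add_opp_r, cd_add_0_r. Qed.
Lemma cd_add_sub m (x y : CD m) : cd_add m (cd_sub m x y) y = x.
Proof. unfold cd_sub; now rewrite <- cd_add_assoc, cd_add_opp_l, cd_add_0_r. Qed.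
Lemma cd_sub_eq_0 m (x y : CD m) : cd_sub m x y = cd_zero m -> x = y.
Proof. intros E; now rewrite <- (cd_add_sub m x y), E, cd_add_0_l. Qed.
Lemma cd_sub_0_r m (x : CD m) : cd_sub m x (cd_zero m) = x.
Proof. unfold cd_sub; now rewrite cd_opp_zero, cd_add_0_r. Qed.
Lemma cd_sub_opp_r m (x y : CD m) : cd_sub m x (cd_opp m y) = cd_add m x y.
Proof. unfold cd_sub; now rewrite cd_opp_involutive. Qed.

Lemma cd_conj_involutive m (x : CD m) : cd_conj m (cd_conj m x) = x.
Proof. revert x; cd_induction m; [ring | f_equal; auto using cd_opp_involutive]. Qed.
Lemma cd_conj_opp m (x : CD m) : cd_conj m (cd_opp m x) = cd_opp m (cd_conj m x).
Proof. revert x; cd_induction m; [ring | f_equal; auto]. Qed.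
Lemma cd_conj_add m (x y : CD m) : cd_conj m (cd_add m x y) = cd_add m (cd_conj m x) (cd_conj m y).
Proof. revert x y; cd_induction m; [ring | f_equal; auto using cd_opp_add]. Qed.
Lemma cd_conj_scale m r (x : CD m) : cd_conj m (cd_scale m r x) = cd_scale m r (cd_conj m x).
Proof. revert x; cd_induction m; [ring | f_equal; auto using cd_scale_opp]. Qed.
Lemma cd_conj_zero m : cd_conj m (cd_zero m) = cd_zero m.
Proof. cd_induction m; [ring | f_equal; auto using cd_opp_zero]. Qed.
Lemma cd_conj_one m : cd_conj m (cd_one m) = cd_one m.
Proof. cd_induction m; [ring | f_equal; auto using cd_opp_zero]. Qed.

(* The Cayley-Dickson product uses both orders of multiplication one level down,
   so left and right versions are proved together. *)
Lemma cd_mul_0 m :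
  (forall x : CD m, cd_mul m (cd_zero m) x = cd_zero m) /\
  (forall x : CD m, cd_mul m x (cd_zero m) = cd_zero m).
Proof.
  induction m as [|m [IHl IHr]]; split; intros; destruct_cd; try ring;
    unfold cd_sub; now rewrite ?IHl, ?IHr, ?cd_conj_zero, ?IHl, ?IHr, ?cd_opp_zero, ?cd_add_0_r.
Qed.

Lemma cd_mul_opp m :
  (forall x y : CD m, cd_mul m (cd_opp m x) y = cd_opp m (cd_mul m x y)) /\
  (forall x y : CD m, cd_mul m x (cd_opp m y) = cd_opp m (cd_mul m x y)).
Proof.
  induction m as [|m [IHl IHr]]; split; intros; destruct_cd; try ring;
    unfold cd_sub; now rewrite ?cd_conj_opp, ?IHl, ?IHr, ?cd_opp_add, ?IHl, ?IHr.
Qed.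

Lemma cd_mul_real m r :
  (forall x : CD m, cd_mul m (cd_real m r) x = cd_scale m r x) /\
  (forall x : CD m, cd_mul m x (cd_real m r) = cd_scale m r x).
Proof.
  unfold cd_real.
  induction m as [|m [IHl IHr]]; split; intros; destruct_cd; try ring;
    destruct (cd_mul_0 m) as [Zl Zr]; unfold cd_sub;
    now rewrite ?cd_scale_zero, ?cd_conj_zero, ?cd_conj_scale, ?cd_conj_one, ?IHl, ?IHr,
      ?Zl, ?Zr, ?cd_opp_zero, ?cd_add_0_r, ?cd_add_0_l.
Qed.

Lemma cd_mul_conj m :
  (forall x : CD m, cd_mul m x (cd_conj m x) = cd_real m (cd_norm2 m x)) /\
  (forall x : CD m, cd_mul m (cd_conj m x) x = cd_real m (cd_norm2 m x)).
Proof.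
  unfold cd_real.
  induction m as [|m [IHl IHr]]; split; intros; destruct_cd; try ring;
    destruct (cd_mul_opp m) as [Ol Or]; unfold cd_sub;
    rewrite ?cd_scale_zero, ?cd_conj_opp, ?cd_conj_involutive, ?Ol, ?Or, ?cd_opp_involutive,
      ?IHl, ?IHr, ?cd_add_opp_l, ?cd_add_opp_r, <- ?cd_scale_plus;
    f_equal; f_equal; ring.
Qed.

Lemma cd_norm2_ip m (x : CD m) : cd_norm2 m x = cd_ip m x x.
Proof. revert x; cd_induction m; [ring | now rewrite !IHm]. Qed.
Lemma cd_ip_sym m (x y : CD m) : cd_ip m x y = cd_ip m y x.
Proof. revert x y; cd_induction m; [ring | now rewrite (IHm c), (IHm c0)]. Qed.
Lemma cd_ip_addl m (x y z : CD m) : cd_ip m (cd_add m x y) z = cd_ip m x z + cd_ip m y z.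
Proof. revert x y z; cd_induction m; [ring | rewrite !IHm; ring]. Qed.
Lemma cd_ip_oppl m (x z : CD m) : cd_ip m (cd_opp m x) z = - cd_ip m x z.
Proof. revert x z; cd_induction m; [ring | rewrite !IHm; ring]. Qed.
Lemma cd_ip_scalel m r (x z : CD m) : cd_ip m (cd_scale m r x) z = r * cd_ip m x z.
Proof. revert x z; cd_induction m; [ring | rewrite !IHm; ring]. Qed.
Lemma cd_ip_0l m (z : CD m) : cd_ip m (cd_zero m) z = 0.
Proof. revert z; cd_induction m; [ring | rewrite !IHm; ring]. Qed.
Lemma cd_ip_addr m (x y z : CD m) : cd_ip m z (cd_add m x y) = cd_ip m z x + cd_ip m z y.
Proof. now rewrite cd_ip_sym, cd_ip_addl, (cd_ip_sym m x), (cd_ip_sym m y). Qed.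
Lemma cd_ip_oppr m (x z : CD m) : cd_ip m z (cd_opp m x) = - cd_ip m z x.
Proof. now rewrite cd_ip_sym, cd_ip_oppl, cd_ip_sym. Qed.
Lemma cd_ip_scaler m r (x z : CD m) : cd_ip m z (cd_scale m r x) = r * cd_ip m z x.
Proof. now rewrite cd_ip_sym, cd_ip_scalel, cd_ip_sym. Qed.
Lemma cd_ip_0r m (z : CD m) : cd_ip m z (cd_zero m) = 0.
Proof. rewrite cd_ip_sym; apply cd_ip_0l. Qed.
Lemma cd_ip_conj m (x y : CD m) : cd_ip m (cd_conj m x) (cd_conj m y) = cd_ip m x y.
Proof. revert x y; cd_induction m; [ring | rewrite IHm, cd_ip_oppl, cd_ip_oppr; ring]. Qed.
Lemma cd_ip_subl m (x y z : CD m) : cd_ip m (cd_sub m x y) z = cd_ip m x z - cd_ip m y z.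
Proof. unfold cd_sub; rewrite cd_ip_addl, cd_ip_oppl; ring. Qed.

Lemma cd_norm2_nonneg m (x : CD m) : 0 <= cd_norm2 m x.
Proof. revert x; cd_induction m; [nra | pose proof (IHm c); pose proof (IHm c0); lra]. Qed.
Lemma cd_norm2_zero m : cd_norm2 m (cd_zero m) = 0.
Proof. induction m; simpl; [ring | rewrite IHm; ring]. Qed.
Lemma cd_norm2_eq_0 m (x : CD m) : cd_norm2 m x = 0 -> x = cd_zero m.
Proof.
  revert x; cd_induction m; [nra|].
  pose proof (cd_norm2_nonneg m c); pose proof (cd_norm2_nonneg m c0).
  f_equal; apply IHm; lra.
Qed.
Lemma cd_norm2_pos m (x : CD m) : x <> cd_zero m -> 0 < cd_norm2 m x.
Proof.
  intros Hx; destruct (cd_norm2_nonneg m x) as [|E]; auto.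
  exfalso; apply Hx, cd_norm2_eq_0; auto.
Qed.

Lemma cd_norm2_scale m r (x : CD m) : cd_norm2 m (cd_scale m r x) = r * r * cd_norm2 m x.
Proof. rewrite !cd_norm2_ip, cd_ip_scalel, cd_ip_scaler; ring. Qed.
Lemma cd_norm2_conj m (x : CD m) : cd_norm2 m (cd_conj m x) = cd_norm2 m x.
Proof. now rewrite !cd_norm2_ip, cd_ip_conj. Qed.
Lemma cd_norm2_add m (x y : CD m) :
  cd_norm2 m (cd_add m x y) = cd_norm2 m x + 2 * cd_ip m x y + cd_norm2 m y.
Proof. rewrite !cd_norm2_ip, !cd_ip_addl, !cd_ip_addr, (cd_ip_sym m y x); ring. Qed.
Lemma cd_norm2_sub m (x y : CD m) :
  cd_norm2 m (cd_sub m x y) = cd_norm2 m x - 2 * cd_ip m x y + cd_norm2 m y.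
Proof.
  unfold cd_sub; rewrite cd_norm2_add, cd_ip_oppr, !cd_norm2_ip, cd_ip_oppl, cd_ip_oppr; ring.
Qed.
Lemma cd_norm2_sub_sym m (x y : CD m) : cd_norm2 m (cd_sub m x y) = cd_norm2 m (cd_sub m y x).
Proof. rewrite !cd_norm2_sub, cd_ip_sym; ring. Qed.
Lemma cd_norm2_real m r : cd_norm2 m (cd_real m r) = r * r.
Proof.
  unfold cd_real; rewrite cd_norm2_scale.
  replace (cd_norm2 m (cd_one m)) with 1; [ring|].
  induction m; simpl; [ring | rewrite <- IHm, cd_norm2_zero; ring].
Qed.

Lemma cd_norm2_sub_le m (x y : CD m) :
  cd_norm2 m y <= 2 * cd_norm2 m x + 2 * cd_norm2 m (cd_sub m x y).
Proof.
  pose proof (cd_norm2_nonneg m (cd_sub m (cd_scale m 2 x) y)) as H.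
  rewrite cd_norm2_sub, cd_norm2_scale, cd_ip_scalel in H; rewrite cd_norm2_sub; lra.
Qed.

Lemma cd_norm_lt m (x : CD m) e : 0 < e -> cd_norm m x < e <-> cd_norm2 m x < e * e.
Proof.
  intros He; unfold cd_norm; rewrite <- (sqrt_square e) at 1 by lra; split.
  - apply sqrt_lt_0_alt.
  - intros H; apply sqrt_lt_1; auto using cd_norm2_nonneg; nra.
Qed.

Lemma cd_norm2_inv m (x : CD m) : x <> cd_zero m -> cd_norm2 m (cd_inv m x) = / cd_norm2 m x.
Proof.
  intros Hx; pose proof (cd_norm2_pos m x Hx).
  unfold cd_inv; rewrite cd_norm2_scale, cd_norm2_conj; field; lra.
Qed.
Lemma cd_inv_neq_0 m (x : CD m) : x <> cd_zero m -> cd_inv m x <> cd_zero m.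
Proof.
  intros Hx E; pose proof (cd_norm2_pos m x Hx).
  pose proof (cd_norm2_inv m x Hx) as N; rewrite E, cd_norm2_zero in N.
  pose proof (Rinv_0_lt_compat _ H); lra.
Qed.
Lemma cd_inv_involutive m (x : CD m) : x <> cd_zero m -> cd_inv m (cd_inv m x) = x.
Proof.
  intros Hx; pose proof (cd_norm2_pos m x Hx).
  unfold cd_inv at 1; rewrite cd_norm2_inv by auto.
  unfold cd_inv; rewrite cd_conj_scale, cd_conj_involutive, cd_scale_assoc.
  replace (/ / cd_norm2 m x * / cd_norm2 m x) with 1 by (field; lra); apply cd_scale_1.
Qed.
Lemma cd_ip_invl m (y z : CD m) : cd_ip m (cd_inv m y) z = cd_ip m y (cd_conj m z) / cd_norm2 m y.
Proof.
  unfold cd_inv; rewrite cd_ip_scalel, <- (cd_conj_involutive m z) at 1.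
  rewrite cd_ip_conj; unfold Rdiv; ring.
Qed.

Record qform (m : nat) := QForm { qa : R; qw : CD m; qc : R }.
Arguments QForm {m}.
Arguments qa {m}.
Arguments qw {m}.
Arguments qc {m}.

Definition qeval m (q : qform m) (y : CD m) : R :=
  qa q * cd_norm2 m y - 2 * cd_ip m y (qw q) + qc q.

Definition qpull m (q : qform m) (b : CD m) : qform m :=
  QForm (qa q * cd_norm2 m b + 2 * cd_ip m b (qw q) + qc q)
        (cd_conj m (cd_add m (qw q) (cd_scale m (qa q) b))) (qa q).

Lemma qeval_pull m (q : qform m) b y : y <> cd_zero m ->
  qeval m (qpull m q b) y = cd_norm2 m y * qeval m q (T m b y).
Proof.
  intros Hy; pose proof (cd_norm2_pos m y Hy).
  destruct q as [A W C]; unfold qeval, qpull, T; simpl.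
  rewrite cd_norm2_sub, cd_ip_subl, cd_norm2_inv, !cd_ip_invl, cd_conj_add, cd_conj_scale,
    cd_ip_addr, cd_ip_scaler by auto.
  field; lra.
Qed.

(* [q] is [A ||y - W/A||^2] when [A > 0] and the constant [C] when [A = 0]. *)
Definition qdegenerate m (q : qform m) : Prop :=
  0 <= qa q /\ 0 <= qc q /\ cd_norm2 m (qw q) = qa q * qc q.

Lemma qpull_degenerate m (q : qform m) b : qdegenerate m q -> qdegenerate m (qpull m q b).
Proof.
  destruct q as [A W C]; unfold qdegenerate, qpull; simpl; intros [HA [HC HW]].
  assert (E : cd_norm2 m (cd_conj m (cd_add m W (cd_scale m A b))) =
              A * (A * cd_norm2 m b + 2 * cd_ip m b W + C)).
  { rewrite cd_norm2_conj, cd_norm2_add, cd_norm2_scale, cd_ip_scaler, HW, (cd_ip_sym m W); ring. }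
  repeat split; auto; [|rewrite E; ring].
  destruct HA as [HA|<-].
  - pose proof (cd_norm2_nonneg m (cd_conj m (cd_add m W (cd_scale m A b)))); nra.
  - rewrite Rmult_0_l in HW; apply cd_norm2_eq_0 in HW; subst W.
    rewrite cd_ip_0r; lra.
Qed.

Lemma qdegenerate_const m (q : qform m) y : qdegenerate m q -> qa q = 0 -> qeval m q y = qc q.
Proof.
  destruct q as [A W C]; unfold qdegenerate, qeval; simpl; intros [_ [_ HW]] ->.
  rewrite Rmult_0_l in HW; apply cd_norm2_eq_0 in HW; subst W.
  rewrite cd_ip_0r; ring.
Qed.

Lemma qdegenerate_root m (q : qform m) c : qdegenerate m q -> 0 < qa q -> qeval m q c = 0 ->
  qw q = cd_scale m (qa q) c /\ forall y, qeval m q y = qa q * cd_norm2 m (cd_sub m y c).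
Proof.
  destruct q as [A W C]; unfold qdegenerate, qeval; simpl; intros [_ [_ HW]] HA Hc.
  assert (Hsq : forall y, A * (A * cd_norm2 m y - 2 * cd_ip m y W + C) =
                          cd_norm2 m (cd_sub m (cd_scale m A y) W)).
  { intros y; rewrite cd_norm2_sub, cd_norm2_scale, cd_ip_scalel, HW; ring. }
  assert (EW : W = cd_scale m A c).
  { symmetry; apply cd_sub_eq_0, cd_norm2_eq_0; rewrite <- Hsq, Hc; ring. }
  split; auto; intros y.
  apply (Rmult_eq_reg_l A); [|lra].
  rewrite Hsq, EW, <- cd_scale_sub, cd_norm2_scale; ring.
Qed.

Lemma qdegenerate_eq m (q q' : qform m) : qdegenerate m q -> qdegenerate m q' ->
  0 < qa q -> qa q = qa q' -> qw q = qw q' -> q = q'.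
Proof.
  destruct q as [A W C], q' as [A' W' C']; unfold qdegenerate; simpl.
  intros [_ [_ HW]] [_ [_ HW']] HA <- <-; f_equal.
  apply (Rmult_eq_reg_l A); lra.
Qed.

Fixpoint orbit_form m (a : nat -> CD m) (n : nat) : qform m :=
  match n with
  | 0%nat => QForm 0 (cd_zero m) 1
  | S n' => qpull m (orbit_form m (fun k => a (S k)) n') (a 1%nat)
  end.

Fixpoint orbit_prod m (a : nat -> CD m) (x0 : CD m) (n : nat) : R :=
  match n with
  | 0%nat => 1
  | S n' => orbit_prod m a x0 n' * cd_norm2 m (orbit m a x0 n')
  end.

Fixpoint cf_defined m (a : nat -> CD m) (n : nat) : Prop :=
  match n with
  | 0%nat => True
  | S n' => cd_add m (convergent m (fun k => a (S k)) n') (a 1%nat) <> cd_zero m /\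
            cf_defined m (fun k => a (S k)) n'
  end.

Lemma orbit_shift m a x0 n :
  orbit m (fun k => a (S k)) (T m (a 1%nat) x0) n = orbit m a x0 (S n).
Proof. induction n; simpl; [reflexivity | now rewrite IHn]. Qed.

Lemma convergent_S m a n :
  convergent m a (S n) = Tinv m (a 1%nat) (convergent m (fun k => a (S k)) n).
Proof.
  unfold convergent; simpl; f_equal.
  generalize 1%nat; induction n; intros s; simpl; [reflexivity | now rewrite IHn].
Qed.

Lemma orbit_prod_shift m a x0 n :
  orbit_prod m a x0 (S n) =
  cd_norm2 m x0 * orbit_prod m (fun k => a (S k)) (T m (a 1%nat) x0) n.
Proof.
  induction n; simpl in *; [ring|].
  rewrite IHn, orbit_shift; simpl; ring.
Qed.

Lemma orbit_form_degenerate m a n : qdegenerate m (orbit_form m a n).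
Proof.
  revert a; induction n; intros a; simpl.
  - unfold qdegenerate; simpl; rewrite cd_norm2_zero; lra.
  - apply qpull_degenerate, IHn.
Qed.

Lemma qeval_orbit_form m a x0 n : (forall k, orbit m a x0 k <> cd_zero m) ->
  qeval m (orbit_form m a n) x0 = orbit_prod m a x0 n.
Proof.
  revert a x0; induction n; intros a x0 Hnz.
  - unfold qeval; simpl; rewrite cd_ip_0r; ring.
  - rewrite orbit_prod_shift; simpl.
    rewrite qeval_pull by exact (Hnz 0%nat).
    rewrite IHn; auto.
    intros k; rewrite orbit_shift; auto.
Qed.

Lemma qeval_orbit_form_convergent m a n : cf_defined m a n ->
  qeval m (orbit_form m a (S n)) (convergent m a n) = 0.
Proof.
  revert a; induction n; intros a Hdef.
  - unfold qeval; simpl; rewrite cd_norm2_zero, cd_ip_0l; ring.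
  - destruct Hdef as [Hnz Hdef].
    change (orbit_form m a (S (S n)))
      with (qpull m (orbit_form m (fun k => a (S k)) (S n)) (a 1%nat)).
    rewrite convergent_S; unfold Tinv.
    rewrite qeval_pull by (apply cd_inv_neq_0; auto).
    unfold T; rewrite cd_inv_involutive, cd_sub_add, IHn by auto; ring.
Qed.

Section Integrality.

Variable m : nat.
Variable Z : CD m -> Prop.
Hypothesis HZring : is_subring m Z.
Hypothesis HZconj : conj_closed m Z.

Lemma subring_zero : Z (cd_zero m).
Proof.
  destruct HZring as [H1 [Hadd [Hopp _]]].
  rewrite <- (cd_add_opp_r m (cd_one m)); auto.
Qed.

Lemma subring_sub x y : Z x -> Z y -> Z (cd_sub m x y).
Proof. destruct HZring as [_ [Hadd [Hopp _]]]; unfold cd_sub; auto. Qed.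

Lemma subring_real_plus r s : Z (cd_real m r) -> Z (cd_real m s) -> Z (cd_real m (r + s)).
Proof. destruct HZring as [_ [Hadd _]]; unfold cd_real; rewrite cd_scale_plus; auto. Qed.

Lemma subring_real_opp r : Z (cd_real m r) -> Z (cd_real m (- r)).
Proof. destruct HZring as [_ [_ [Hopp _]]]; unfold cd_real; rewrite cd_scale_Ropp; auto. Qed.

Lemma subring_scale r x : Z (cd_real m r) -> Z x -> Z (cd_scale m r x).
Proof. destruct HZring as [_ [_ [_ Hmul]]]; rewrite <- (proj1 (cd_mul_real m r)); auto. Qed.

Lemma subring_norm2 y : Z y -> Z (cd_real m (cd_norm2 m y)).
Proof. destruct HZring as [_ [_ [_ Hmul]]]; rewrite <- (proj1 (cd_mul_conj m)); auto. Qed.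

(* [2 <x, y> = ||x + y||^2 - ||x||^2 - ||y||^2] *)
Lemma subring_ip2 x y : Z x -> Z y -> Z (cd_real m (2 * cd_ip m x y)).
Proof.
  intros Hx Hy.
  replace (2 * cd_ip m x y)
    with (cd_norm2 m (cd_add m x y) + - cd_norm2 m x + - cd_norm2 m y)
    by (rewrite cd_norm2_add; ring).
  destruct HZring as [_ [Hadd _]].
  repeat apply subring_real_plus; auto using subring_real_opp, subring_norm2.
Qed.

Definition qintegral (q : qform m) : Prop :=
  Z (cd_real m (qa q)) /\ Z (qw q) /\ Z (cd_real m (qc q)).

Lemma qpull_integral q b : Z b -> qintegral q -> qintegral (qpull m q b).
Proof.
  destruct HZring as [_ [Hadd _]]; destruct q as [A W C].
  unfold qintegral, qpull; simpl; intros Hb [HA [HW HC]].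
  repeat split; auto.
  - repeat apply subring_real_plus; auto using subring_ip2.
    unfold cd_real at 1; rewrite <- cd_scale_assoc; fold (cd_real m (cd_norm2 m b)).
    auto using subring_scale, subring_norm2.
  - apply HZconj, Hadd; auto using subring_scale.
Qed.

Lemma orbit_form_integral a n : (forall k, (1 <= k)%nat -> Z (a k)) ->
  qintegral (orbit_form m a n).
Proof.
  revert a; induction n; intros a Ha; simpl.
  - unfold qintegral, cd_real; simpl; rewrite cd_scale_0, cd_scale_1.
    destruct HZring; auto using subring_zero.
  - apply qpull_integral; [apply Ha; lia|].
    apply IHn; intros; apply Ha; lia.
Qed.

End Integrality.

Definition uniformly_discrete m (S : CD m -> Prop) (d : R) : Prop :=
  forall z z', S z -> S z' -> cd_norm2 m (cd_sub m z z') < d -> z = z'.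

Section Discreteness.

Variable m : nat.
Variable Z : CD m -> Prop.
Hypothesis HZring : is_subring m Z.
Hypothesis HZdisc : is_discrete m Z.

Lemma subring_uniformly_discrete : exists d, 0 < d /\ uniformly_discrete m Z d.
Proof.
  destruct (HZdisc _ (subring_zero m Z HZring)) as [e [He Hiso]].
  exists (e * e); split; [nra|].
  intros z z' Hz Hz' Hd; apply cd_sub_eq_0, Hiso.
  - apply subring_sub; auto.
  - rewrite cd_sub_0_r; apply cd_norm_lt; auto.
Qed.

(* The powers of [r] stay in [Z], so they cannot tend to [0]. *)
Lemma subring_real_ge_1 r : 0 < r -> Z (cd_real m r) -> 1 <= r.
Proof.
  intros Hr HZr; destruct (Rle_or_lt 1 r) as [|Hlt]; auto; exfalso.
  destruct (HZdisc _ (subring_zero m Z HZring)) as [e [He Hiso]].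
  assert (Hpow : forall k, Z (cd_real m (r ^ k))).
  { induction k; simpl.
    - unfold cd_real; rewrite cd_scale_1; apply HZring.
    - unfold cd_real at 1; rewrite <- cd_scale_assoc.
      apply (subring_scale m Z HZring); assumption. }
  destruct (pow_lt_1_zero r ltac:(rewrite Rabs_right; lra) e He) as [N HN].
  specialize (HN N (le_n N)); rewrite Rabs_right in HN by (apply Rle_ge, pow_le; lra).
  assert (E : cd_real m (r ^ N) = cd_zero m).
  { apply Hiso; auto.
    rewrite cd_sub_0_r; apply cd_norm_lt; auto.
    rewrite cd_norm2_real; pose proof (pow_lt r N Hr); nra. }
  apply (f_equal (cd_norm2 m)) in E; rewrite cd_norm2_real, cd_norm2_zero in E.
  pose proof (pow_lt r N Hr); nra.
Qed.

End Discreteness.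

Lemma eventually_not_of_injective_in_list {X : Type} (f : nat -> X) (L : list X) :
  forall bad : nat -> Prop, (forall n, bad n -> In (f n) L) ->
  (forall n n', bad n -> bad n' -> f n = f n' -> n = n') ->
  exists N, forall n, (N <= n)%nat -> ~ bad n.
Proof.
  induction L as [|y L IH]; intros bad Hin Hinj.
  - exists 0%nat; intros n _ Hb; exact (Hin n Hb).
  - destruct (classic (exists n0, bad n0 /\ f n0 = y)) as [[n0 [Hb0 Hy]]|Hnone].
    + destruct (IH (fun n => bad n /\ n <> n0)) as [N HN].
      * intros n [Hb Hn]; destruct (Hin n Hb) as [E|]; auto.
        exfalso; apply Hn, Hinj; congruence.
      * intros n n' [Hb _] [Hb' _]; apply Hinj; auto.
      * exists (Nat.max N (S n0)); intros n Hn Hb.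
        apply (HN n); [lia | split; [auto | lia]].
    + apply IH; auto.
      intros n Hb; destruct (Hin n Hb) as [E|]; auto.
      exfalso; apply Hnone; eauto.
Qed.

Fixpoint cell_index (m : nat) : Type :=
  match m with 0%nat => BinInt.Z | S m' => (cell_index m' * cell_index m')%type end.

Fixpoint cell (m : nat) (K : R) : CD m -> cell_index m :=
  match m return CD m -> cell_index m with
  | 0%nat => fun x => up (K * x)
  | S m' => fun x => (cell m' K (fst x), cell m' K (snd x))
  end.

Definition int_range (B : nat) : list BinInt.Z :=
  map (fun i => (Z.of_nat i - Z.of_nat B)%Z) (seq 0 (2 * B + 2)).

Fixpoint cells (m : nat) (B : nat) : list (cell_index m) :=
  match m return list (cell_index m) with
  | 0%nat => int_range B
  | S m' => list_prod (cells m' B) (cells m' B)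
  end.

Lemma in_int_range B z : (- Z.of_nat B <= z <= Z.of_nat B + 1)%Z -> In z (int_range B).
Proof.
  intros Hz; apply in_map_iff; exists (Z.to_nat (z + Z.of_nat B)).
  split; [lia | apply in_seq; lia].
Qed.

Lemma cell_in_cells m K B r (x : CD m) : 0 <= K -> K * (1 + r) < INR B ->
  cd_norm2 m x <= r -> In (cell m K x) (cells m B).
Proof.
  intros HK HB; revert x; induction m; intros x Hx; simpl in *.
  - destruct (archimed (K * x)) as [Hup1 Hup2]; rewrite INR_IZR_INZ in HB.
    assert (Hxr : - (1 + r) <= x <= 1 + r) by (split; nra).
    pose proof (Rmult_le_pos K (1 + r + x) HK ltac:(lra)).
    pose proof (Rmult_le_pos K (1 + r - x) HK ltac:(lra)).
    assert (Hlo : - IZR (Z.of_nat B) < K * x) by nra.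
    assert (Hhi : K * x < IZR (Z.of_nat B)) by nra.
    apply in_int_range; split.
    + apply le_IZR; rewrite opp_IZR; lra.
    + apply le_IZR; rewrite plus_IZR; lra.
  - destruct x as [x1 x2]; simpl in *.
    pose proof (cd_norm2_nonneg m x1); pose proof (cd_norm2_nonneg m x2).
    apply in_prod; apply IHm; lra.
Qed.

Lemma cell_eq_close m K (x y : CD m) :
  cell m K x = cell m K y -> cd_norm2 m (cd_sub m x y) * (K * K) < 2 ^ m.
Proof.
  revert x y; induction m; intros x y E; simpl in *.
  - destruct (archimed (K * x)) as [A1 A2], (archimed (K * y)) as [B1 B2].
    rewrite E in A1, A2; unfold cd_sub; simpl.
    assert (-1 < K * x - K * y < 1) by lra; nra.
  - destruct x as [x1 x2], y as [y1 y2]; simpl in *; injection E as E1 E2.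
    pose proof (IHm _ _ E1); pose proof (IHm _ _ E2); unfold cd_sub in *; lra.
Qed.

Lemma uniformly_discrete_pair m (P : CD m -> Prop) d : uniformly_discrete m P d ->
  uniformly_discrete (S m) (fun p => P (fst p) /\ P (snd p)) d.
Proof.
  intros Hdisc [z1 z2] [w1 w2] [H1 H2] [H1' H2'] Hn.
  change (cd_norm2 m (cd_sub m z1 w1) + cd_norm2 m (cd_sub m z2 w2) < d) in Hn.
  pose proof (cd_norm2_nonneg m (cd_sub m z1 w1)); pose proof (cd_norm2_nonneg m (cd_sub m z2 w2)).
  simpl in *; f_equal; apply Hdisc; auto; lra.
Qed.

(* Distinct points of a [d]-discrete set lie in distinct cells of mesh [1/K]
   once [2^m < d K^2]. *)
Lemma uniformly_discrete_eventually m (P : CD m -> Prop) d r (bad : nat -> Prop)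
  (f : nat -> CD m) : 0 < d -> uniformly_discrete m P d ->
  (forall n, bad n -> P (f n) /\ cd_norm2 m (f n) <= r) ->
  (forall n n', bad n -> bad n' -> f n = f n' -> n = n') ->
  exists N, forall n, (N <= n)%nat -> ~ bad n.
Proof.
  intros Hd Hdisc Hbd Hinj.
  set (K := 2 ^ m / d + 1).
  assert (H2m : 0 < 2 ^ m) by (apply pow_lt; lra).
  assert (HK1 : 1 <= K) by (unfold K; pose proof (Rdiv_lt_0_compat _ _ H2m Hd); lra).
  assert (HK : 2 ^ m < d * (K * K)).
  { assert (E : d * K = 2 ^ m + d) by (unfold K; field; lra). nra. }
  destruct (INR_archimed 1 (K * (1 + r))) as [B HB]; [lra|].
  apply (eventually_not_of_injective_in_list (fun n => cell m K (f n)) (cells m B)).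
  - intros n Hb; apply cell_in_cells with r; [lra | lra | apply Hbd; auto].
  - intros n n' Hb Hb' Hc; apply Hinj; auto.
    apply Hdisc; try apply Hbd; auto.
    pose proof (cell_eq_close m K _ _ Hc).
    assert (0 < K * K) by nra.
    apply (Rmult_lt_reg_r (K * K)); nra.
Qed.

Section OrbitProduct.

Variable m : nat.
Variable a : nat -> CD m.
Variable x0 : CD m.
Hypothesis orbit_neq_0 : forall k, orbit m a x0 k <> cd_zero m.
Hypothesis orbit_norm2_lt_1 : forall k, cd_norm2 m (orbit m a x0 k) < 1.

Lemma orbit_prod_pos n : 0 < orbit_prod m a x0 n.
Proof.
  induction n; simpl; [lra|].
  pose proof (cd_norm2_pos m _ (orbit_neq_0 n)); nra.
Qed.

Lemma orbit_prod_S_lt n : orbit_prod m a x0 (S n) < orbit_prod m a x0 n.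
Proof.
  simpl; pose proof (orbit_prod_pos n); pose proof (orbit_norm2_lt_1 n).
  pose proof (cd_norm2_pos m _ (orbit_neq_0 n)); nra.
Qed.

Lemma orbit_prod_lt n n' : (n < n')%nat -> orbit_prod m a x0 n' < orbit_prod m a x0 n.
Proof.
  induction 1 as [|n' _ IH]; [apply orbit_prod_S_lt|].
  pose proof (orbit_prod_S_lt n'); lra.
Qed.

Lemma orbit_prod_le_1 n : orbit_prod m a x0 n <= 1.
Proof.
  destruct n; simpl; [lra|].
  pose proof (orbit_prod_lt 0 (S n) ltac:(lia)); simpl in *; lra.
Qed.

Lemma orbit_prod_inj n n' : orbit_prod m a x0 n = orbit_prod m a x0 n' -> n = n'.
Proof.
  intros E; destruct (lt_eq_lt_dec n n') as [[Hlt|]|Hlt]; auto; exfalso.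
  - pose proof (orbit_prod_lt _ _ Hlt); lra.
  - pose proof (orbit_prod_lt _ _ Hlt); lra.
Qed.

End OrbitProduct.

Definition admissible m (Z : CD m -> Prop) (a : nat -> CD m) (x0 : CD m) : Prop :=
  (forall k, (1 <= k)%nat -> Z (a k)) /\
  (forall k, orbit m a x0 k <> cd_zero m) /\
  (forall k, cd_norm2 m (orbit m a x0 k) < 1).

Lemma admissible_shift m Z a x0 : admissible m Z a x0 ->
  admissible m Z (fun k => a (S k)) (T m (a 1%nat) x0).
Proof.
  intros [Ha [Hnz Hlt]]; split; [|split]; intros k; rewrite ?orbit_shift; auto with arith.
Qed.

Section Convergents.

Variable m : nat.
Variable Z : CD m -> Prop.
Hypothesis HZring : is_subring m Z.
Hypothesis HZdisc : is_discrete m Z.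
Hypothesis HZconj : conj_closed m Z.

Lemma orbit_form_at_convergent a x0 n : admissible m Z a x0 -> cf_defined m a n ->
  1 <= qa (orbit_form m a (S n)) /\
  qw (orbit_form m a (S n)) = cd_scale m (qa (orbit_form m a (S n))) (convergent m a n) /\
  orbit_prod m a x0 (S n) =
    qa (orbit_form m a (S n)) * cd_norm2 m (cd_sub m x0 (convergent m a n)).
Proof.
  intros [Ha [Hnz Hlt]] Hdef.
  pose proof (qeval_orbit_form m a x0 (S n) Hnz) as Hx0.
  pose proof (qeval_orbit_form_convergent m a n Hdef) as Hc.
  pose proof (orbit_prod_pos m a x0 Hnz (S n)) as Hpos.
  pose proof (orbit_form_degenerate m a (S n)) as Hdeg.
  destruct (orbit_form_integral m Z HZring HZconj a (S n) Ha) as [HA _].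
  set (q := orbit_form m a (S n)) in *.
  assert (HApos : 0 < qa q).
  { destruct (proj1 Hdeg) as [|HA0]; auto; exfalso.
    rewrite !(qdegenerate_const m q) in Hx0, Hc by auto; lra. }
  destruct (qdegenerate_root m q _ Hdeg HApos Hc) as [HW Hev].
  rewrite <- Hx0, Hev; repeat split; auto.
  apply (subring_real_ge_1 m Z HZring HZdisc); auto.
Qed.

(* If [c' + a_1 = 0], then [x_1 - c' = x_0^-1] would have norm [> 1],
   while [A ||x_1 - c'||^2 <= 1] with [A >= 1]. *)
Lemma admissible_cf_defined n : forall a x0, admissible m Z a x0 -> cf_defined m a n.
Proof.
  induction n as [|n IH]; intros a x0 Hadm; simpl; auto.
  pose proof (admissible_shift m Z a x0 Hadm) as Hadm'.
  split; [|exact (IH _ _ Hadm')].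
  intros Hz.
  destruct (orbit_form_at_convergent _ _ n Hadm' (IH _ _ Hadm')) as [HA [_ Hprod]].
  pose proof (orbit_prod_le_1 m _ _ (proj1 (proj2 Hadm')) (proj2 (proj2 Hadm')) (S n)) as Hle.
  assert (Hc : convergent m (fun k => a (S k)) n = cd_opp m (a 1%nat)).
  { rewrite <- (cd_sub_add m _ (a 1%nat)), Hz; apply cd_add_0_l. }
  rewrite Hc, cd_sub_opp_r in Hprod.
  replace (cd_add m (T m (a 1%nat) x0) (a 1%nat)) with (cd_inv m x0) in Hprod
    by (symmetry; apply cd_add_sub).
  destruct Hadm as [_ [Hnz Hlt]]; specialize (Hnz 0%nat); specialize (Hlt 0%nat).
  cbn [orbit] in Hnz, Hlt; rewrite cd_norm2_inv in Hprod by auto.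
  pose proof (cd_norm2_pos m x0 Hnz).
  assert (1 < / cd_norm2 m x0) by (rewrite <- Rinv_1; apply Rinv_lt_contravar; lra).
  rewrite Hprod in Hle; nra.
Qed.

Lemma orbit_form_coeffs_inj a x0 n n' : admissible m Z a x0 ->
  qa (orbit_form m a (S n)) = qa (orbit_form m a (S n')) ->
  qw (orbit_form m a (S n)) = qw (orbit_form m a (S n')) -> n = n'.
Proof.
  intros Hadm EA EW.
  destruct (orbit_form_at_convergent a x0 n Hadm (admissible_cf_defined n a x0 Hadm)) as [HA _].
  assert (Eq : orbit_form m a (S n) = orbit_form m a (S n'))
    by (apply qdegenerate_eq; auto using orbit_form_degenerate; lra).
  destruct Hadm as [_ [Hnz Hlt]].
  assert (E : orbit_prod m a x0 (S n) = orbit_prod m a x0 (S n'))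
    by now rewrite <- !(qeval_orbit_form m a x0), Eq.
  apply orbit_prod_inj in E; auto.
Qed.

Lemma orbit_form_coeffs_bounded a x0 n eps : admissible m Z a x0 -> 0 < eps ->
  eps <= cd_norm2 m (cd_sub m x0 (convergent m a n)) ->
  cd_norm2 m (cd_real m (qa (orbit_form m a (S n)))) + cd_norm2 m (qw (orbit_form m a (S n)))
    <= 5 / (eps * eps).
Proof.
  intros Hadm Heps Hfar.
  destruct (orbit_form_at_convergent a x0 n Hadm (admissible_cf_defined n a x0 Hadm))
    as [HA [HW Hprod]].
  pose proof (orbit_prod_le_1 m a x0 (proj1 (proj2 Hadm)) (proj2 (proj2 Hadm)) (S n)) as Hle.
  pose proof (proj2 (proj2 Hadm) 0%nat) as Hx0; cbn [orbit] in Hx0.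
  rewrite cd_norm2_real, HW, cd_norm2_scale.
  set (A := qa (orbit_form m a (S n))) in *.
  set (s := cd_norm2 m (cd_sub m x0 (convergent m a n))) in *.
  pose proof (cd_norm2_sub_le m x0 (convergent m a n)) as Hc; fold s in Hc.
  assert (Hs1 : s <= 1) by nra.
  assert (HAe : A * eps <= 1) by nra.
  apply (Rmult_le_reg_r (eps * eps)); [nra|].
  replace (5 / (eps * eps) * (eps * eps)) with 5 by (field; lra).
  assert (HAe2 : A * A * (eps * eps) <= 1).
  { replace (A * A * (eps * eps)) with ((A * eps) * (A * eps)) by ring.
    assert (0 <= A * eps) by nra; nra. }
  pose proof (cd_norm2_nonneg m (convergent m a n)).
  assert (Hc4 : cd_norm2 m (convergent m a n) <= 4) by lra.
  nra.
Qed.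

Lemma convergent_norm2_eventually_lt a x0 : admissible m Z a x0 ->
  forall eps, 0 < eps -> exists N, forall n, (N <= n)%nat ->
    cd_norm2 m (cd_sub m (convergent m a n) x0) < eps.
Proof.
  intros Hadm eps Heps.
  destruct (subring_uniformly_discrete m Z HZring HZdisc) as [d [Hd Hdisc]].
  set (f := (fun n => (cd_real m (qa (orbit_form m a (S n))), qw (orbit_form m a (S n))))
              : nat -> CD (S m)).
  destruct (uniformly_discrete_eventually (S m) _ d (5 / (eps * eps))
    (fun n => eps <= cd_norm2 m (cd_sub m x0 (convergent m a n))) f Hd
    (uniformly_discrete_pair m Z d Hdisc)) as [N HN].
  - intros n Hfar; split.
    + destruct (orbit_form_integral m Z HZring HZconj a (S n) (proj1 Hadm)) as [HA [HW _]].
      split; assumption.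
    + apply (orbit_form_coeffs_bounded a x0); assumption.
  - intros n n' _ _ E; injection E as EA EW.
    apply (f_equal (cd_norm2 m)) in EA; rewrite !cd_norm2_real in EA.
    apply (orbit_form_coeffs_inj a x0); auto.
    destruct (orbit_form_at_convergent a x0 n Hadm (admissible_cf_defined n a x0 Hadm)) as [HA _].
    destruct (orbit_form_at_convergent a x0 n' Hadm (admissible_cf_defined n' a x0 Hadm)) as [HA' _].
    apply Rsqr_inj; [lra | lra | exact EA].
  - exists N; intros n Hn; specialize (HN n Hn); simpl in HN.
    rewrite cd_norm2_sub_sym; lra.
Qed.

End Convergents.

Theorem theorem1p2 (m : nat) (Hm : (m <= 3)%nat) (Z : CD m -> Prop)
  (HZring : is_subring m Z) (HZdisc : is_discrete m Z)
  (HZconj : conj_closed m Z)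
  (a : nat -> CD m) (x0 : CD m)
  (Ha : forall n, (1 <= n)%nat -> Z (a n))
  (Hdef : forall n, orbit m a x0 n <> cd_zero m)
  (Hlt : forall n, cd_norm m (orbit m a x0 n) < 1) :
  cd_converges_to m (convergent m a) x0.
Proof.
  assert (Hadm : admissible m Z a x0).
  { repeat split; auto.
    intros k; specialize (Hlt k); rewrite cd_norm_lt in Hlt by lra; lra. }
  intros eps Heps.
  destruct (convergent_norm2_eventually_lt m Z HZring HZdisc HZconj a x0 Hadm (eps * eps))
    as [N HN]; [nra|].
  exists N; intros n Hn; apply cd_norm_lt; auto.
Qed.
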